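(* For every locally consistent maximal P2P system $PS$, the set $MaxWM(PS)$ of maximal weak models of $PS$ is nonempty.
   Context: Peer atoms: a peer identifier is a positive integer; a peer atom is $i\!:\!p(t_1,\dots,t_k)$ with $i$ a peer identifier, $p$ a predicate and $t_j$ terms; $i\!:\!p$ is a peer predicate. A literal is an atom $A$ or its negation-as-failure $not\ A$. Built-in atoms are $X\,\theta\,Y$ with $\theta\in\{<,>,\le,\ge,=,\neq\}$. Rules (all safe): a standard rule $H\leftarrow \mathcal B$ with $H$ a peer atom and $\mathcal B$ a conjunction of peer literals and built-ins; an integrity constraint $\leftarrow \mathcal B$; a maximal mapping rule $i\!:\!h(X) \leftharpoonup j\!:\!(p_1(X_1),\dots,p_m(X_m),\varphi)$ with $i\neq j$; a minimal mapping rule, identical but written with $\leftharpoondown$. A peer $P_i=\langle D_i,LP_i,MP_i,IC_i\rangle$ consists of a finite set $D_i$ of ground atoms with identifier $i$, a finite set $LP_i$ of standard rules all of whose atoms have identifier $i$, a finite set $MP_i$ of mapping rules with head identifier $i$, and a finite set $IC_i$ of integrity constraints over atoms with identifier $i$. A P2P system is a set $PS=\{P_1,\dots,P_n\}$ of peers in which every source identifier of a mapping rule lies in $[1..n]$; $D,LP,MP,IC$ are the unions of the components, and $PS$ is identified with $D\cup LP\cup MP\cup IC$. A maximal P2P system is one all of whose mapping rules are maximal. A predicate is derived if it heads a standard rule, a mapping predicate if it heads a mapping rule, base otherwise; each predicate has exactly one type and each mapping predicate heads exactly one mapping rule. Semantics: an interpretation is a set of ground peer atoms; $A$ true iff $A\in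 M$, $not\ A$ true iff $A\notin M$; a standard rule is satisfied iff its body is false or its head true; a constraint iff its body is false. $MM(\Pi)$ is the set of inclusion-minimal models of a program $\Pi$. The stable models $SM(\Pi)$ of a program $\Pi$ are the interpretations $M$ that are the minimal model of the Gelfond–Lifschitz reduct $\Pi^M$ (remove from $ground(\Pi)$ rules containing $not\ A$ with $A\in M$, then delete all negative literals). A peer $P_i$ is locally consistent if $SM(D_i\cup LP_i\cup IC_i)\neq\emptyset$; a P2P system is locally consistent if all its peers are. $St(r)$ turns a mapping rule with head $H$ and body $\mathcal B$ into $H\leftarrow\mathcal B$. An interpretation $M$ is a weak model of $PS$ if $\{M\}=MM(St(PS^M))$, where $PS^M$ is obtained from $ground(PS)$ by removing every rule whose body contains $not\ A$ with $A\in M$, deleting negative literals from the remaining rules, and removing every ground mapping rule whose head is not in $M$. $M[MP]$ is the set of atoms of $M$ with a mapping predicate. For weak models, $M\sqsupseteq_{Max}N$ iff $M[MP]\supseteq N[MP]$, and $M\sqsupset_{Max}N$ iff $M\sqsupseteq_{Max}N$ and not $N\sqsupseteq_{Max}M$. A weak model $M$ is maximal if there is no weak model $N$ with $N\sqsupset_{Max}M$; $MaxWM(PS)$ is the set of maximal weak models. *)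

From Stdlib Require Import List Arith.
Import ListNotations.

Inductive term := TVar (x : nat) | TConst (c : nat).

Record atom := mkAtom { a_id : nat; a_pred : nat; a_args : list term }.

Inductive cmp := CLt | CGt | CLe | CGe | CEq | CNe.

Record builtin := mkBuiltin { b_op : cmp; b_l : term; b_r : term }.

Inductive literal := LPos (a : atom) | LNeg (a : atom) | LBuiltin (b : builtin).

Inductive mkind := MaxMap | MinMap.

(* Rules:
   RStd h B               :  h <- B
   RIC B                  :  <- B
   RMap k h j body phi    :  h <-(max/min)- j:(p_1(X_1),...,p_m(X_m), phi)
      where body = [(p_1,X_1);...;(p_m,X_m)] and phi a conjunction of built-ins *)
Inductive rule :=
  | RStd (h : atom) (body : list literal)
  | RIC (body : list literal)
  | RMap (k : mkind) (h : atom) (j : nat) (body : list (nat * list term))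
         (phi : list builtin).

Record gatom := mkGAtom { g_id : nat; g_pred : nat; g_args : list nat }.

Record peer := mkPeer {
  pD : list gatom; pLP : list rule; pMP : list rule; pIC : list rule }.

(* A P2P system: the list [P_1; ...; P_n] (peer at position k has id k+1). *)
Definition p2p := list peer.

Record program := mkProgram { facts : list gatom; rules : list rule }.

Definition prog_of (PS : p2p) : program :=
  mkProgram (flat_map pD PS)
            (flat_map (fun P => pLP P ++ pMP P ++ pIC P) PS).

Definition vars_term (t : term) : list nat :=
  match t with TVar x => [x] | TConst _ => [] end.
Definition consts_term (t : term) : list nat :=
  match t with TVar _ => [] | TConst c => [c] end.
Definition vars_atom (a : atom) : list nat := flat_map vars_term (a_args a).
Definition consts_atom (a : atom) : list nat := flat_map consts_term (a_args a).
Definition vars_builtin (b : builtin) : list nat :=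
  vars_term (b_l b) ++ vars_term (b_r b).
Definition consts_builtin (b : builtin) : list nat :=
  consts_term (b_l b) ++ consts_term (b_r b).
Definition vars_lit (l : literal) : list nat :=
  match l with LPos a | LNeg a => vars_atom a | LBuiltin b => vars_builtin b end.
Definition consts_lit (l : literal) : list nat :=
  match l with LPos a | LNeg a => consts_atom a | LBuiltin b => consts_builtin b end.
Definition pos_vars (B : list literal) : list nat :=
  flat_map (fun l => match l with LPos a => vars_atom a | _ => [] end) B.

Definition vars_rule (r : rule) : list nat :=
  match r with
  | RStd h B => vars_atom h ++ flat_map vars_lit B
  | RIC B => flat_map vars_lit B
  | RMap _ h _ body phi =>
      vars_atom h ++ flat_map (fun pa => flat_map vars_term (snd pa)) body
                  ++ flat_map vars_builtin phi
  end.

Definition consts_rule (r : rule) : list nat :=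
  match r with
  | RStd h B => consts_atom h ++ flat_map consts_lit B
  | RIC B => flat_map consts_lit B
  | RMap _ h _ body phi =>
      consts_atom h ++ flat_map (fun pa => flat_map consts_term (snd pa)) body
                    ++ flat_map consts_builtin phi
  end.

Definition safe (r : rule) : Prop :=
  match r with
  | RStd _ B | RIC B => forall x, In x (vars_rule r) -> In x (pos_vars B)
  | RMap _ _ _ body _ =>
      forall x, In x (vars_rule r) ->
        In x (flat_map (fun pa => flat_map vars_term (snd pa)) body)
  end.

Definition HU (P : program) (c : nat) : Prop :=
  In c (flat_map g_args (facts P)) \/ In c (flat_map consts_rule (rules P)).

Definition subst := nat -> nat.

Definition inst_term (s : subst) (t : term) : nat :=
  match t with TVar x => s x | TConst c => c end.
Definition inst_atom (s : subst) (a : atom) : gatom :=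
  mkGAtom (a_id a) (a_pred a) (map (inst_term s) (a_args a)).

Definition eval_cmp (o : cmp) (x y : nat) : bool :=
  match o with
  | CLt => Nat.ltb x y | CGt => Nat.ltb y x
  | CLe => Nat.leb x y | CGe => Nat.leb y x
  | CEq => Nat.eqb x y | CNe => negb (Nat.eqb x y)
  end.
Definition eval_builtin (s : subst) (b : builtin) : bool :=
  eval_cmp (b_op b) (inst_term s (b_l b)) (inst_term s (b_r b)).

(* A ground rule: optional head (None = constraint), positive body atoms,
   negated body atoms, truth value of the (ground) built-ins, and a flag
   telling whether it is (an instance of) a mapping rule. *)
Record grule := mkGRule {
  gr_head : option gatom; gr_pos : list gatom; gr_neg : list gatom;
  gr_bi : bool; gr_map : bool }.

Definition pos_atoms (B : list literal) : list atom :=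
  flat_map (fun l => match l with LPos a => [a] | _ => [] end) B.
Definition neg_atoms (B : list literal) : list atom :=
  flat_map (fun l => match l with LNeg a => [a] | _ => [] end) B.
Definition bi_atoms (B : list literal) : list builtin :=
  flat_map (fun l => match l with LBuiltin b => [b] | _ => [] end) B.

Definition inst_rule (s : subst) (r : rule) : grule :=
  match r with
  | RStd h B =>
      mkGRule (Some (inst_atom s h)) (map (inst_atom s) (pos_atoms B))
              (map (inst_atom s) (neg_atoms B))
              (forallb (eval_builtin s) (bi_atoms B)) false
  | RIC B =>
      mkGRule None (map (inst_atom s) (pos_atoms B))
              (map (inst_atom s) (neg_atoms B))
              (forallb (eval_builtin s) (bi_atoms B)) false
  | RMap _ h j body phi =>
      mkGRule (Some (inst_atom s h))
              (map (fun pa => mkGAtom j (fst pa) (map (inst_term s) (snd pa))) body)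
              [] (forallb (eval_builtin s) phi) true
  end.

Definition gprogram := grule -> Prop.

Definition ground (P : program) : gprogram := fun g =>
  (exists a, In a (facts P) /\ g = mkGRule (Some a) [] [] true false) \/
  (exists r s, In r (rules P) /\
     (forall x, In x (vars_rule r) -> HU P (s x)) /\ g = inst_rule s r).

Definition interp := gatom -> Prop.

Definition body_true (M : interp) (g : grule) : Prop :=
  Forall M (gr_pos g) /\ Forall (fun a => ~ M a) (gr_neg g) /\ gr_bi g = true.

Definition satisfies (M : interp) (g : grule) : Prop :=
  body_true M g ->
  match gr_head g with Some a => M a | None => False end.

Definition is_model (GP : gprogram) (M : interp) : Prop :=
  forall g, GP g -> satisfies M g.

Definition subseteq (N M : interp) : Prop := forall a, N a -> M a.
Definition set_eq (N M : interp) : Prop := forall a, N a <-> M a.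

Definition MM (GP : gprogram) (M : interp) : Prop :=
  is_model GP M /\ forall N, is_model GP N -> subseteq N M -> subseteq M N.

Definition drop_neg (g : grule) : grule :=
  mkGRule (gr_head g) (gr_pos g) [] (gr_bi g) (gr_map g).

Definition gl_reduct (GP : gprogram) (M : interp) : gprogram := fun g' =>
  exists g, GP g /\ Forall (fun a => ~ M a) (gr_neg g) /\ g' = drop_neg g.

Definition SM (P : program) (M : interp) : Prop :=
  MM (gl_reduct (ground P) M) M.

Definition locally_consistent_peer (P : peer) : Prop :=
  exists M, SM (mkProgram (pD P) (pLP P ++ pIC P)) M.

Definition locally_consistent (PS : p2p) : Prop :=
  forall P, In P PS -> locally_consistent_peer P.

Definition ps_reduct (GP : gprogram) (M : interp) : gprogram := fun g' =>
  exists g, GP g /\ Forall (fun a => ~ M a) (gr_neg g) /\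
    (gr_map g = true -> match gr_head g with Some a => M a | None => False end) /\
    g' = drop_neg g.

Definition St (GP : gprogram) : gprogram := fun g' =>
  exists g, GP g /\ g' = mkGRule (gr_head g) (gr_pos g) (gr_neg g) (gr_bi g) false.

(* Weak models: {M} = MM(St(PS^M)). *)
Definition weak_model (PS : p2p) (M : interp) : Prop :=
  MM (St (ps_reduct (ground (prog_of PS)) M)) M /\
  forall N, MM (St (ps_reduct (ground (prog_of PS)) M)) N -> set_eq N M.

Definition is_mapping_pred (PS : p2p) (i p : nat) : Prop :=
  exists k h j body phi, In (RMap k h j body phi) (rules (prog_of PS)) /\
    a_id h = i /\ a_pred h = p.

Definition restrict_MP (PS : p2p) (M : interp) : interp := fun a =>
  M a /\ is_mapping_pred PS (g_id a) (g_pred a).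

Definition geMax (PS : p2p) (M N : interp) : Prop :=
  subseteq (restrict_MP PS N) (restrict_MP PS M).
Definition gtMax (PS : p2p) (M N : interp) : Prop :=
  geMax PS M N /\ ~ geMax PS N M.

Definition max_weak_model (PS : p2p) (M : interp) : Prop :=
  weak_model PS M /\ ~ exists N, weak_model PS N /\ gtMax PS N M.

Definition lit_ids_ok (i : nat) (l : literal) : Prop :=
  match l with LPos a | LNeg a => a_id a = i | LBuiltin _ => True end.

Definition std_rule_ok (i : nat) (r : rule) : Prop :=
  exists h B, r = RStd h B /\ a_id h = i /\ Forall (lit_ids_ok i) B /\ safe r.

Definition ic_ok (i : nat) (r : rule) : Prop :=
  exists B, r = RIC B /\ Forall (lit_ids_ok i) B /\ safe r.

Definition map_rule_ok (i n : nat) (r : rule) : Prop :=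
  exists k h j body phi, r = RMap k h j body phi /\ a_id h = i /\
    1 <= j <= n /\ i <> j /\ safe r.

Definition peer_ok (i n : nat) (P : peer) : Prop :=
  Forall (fun a => g_id a = i) (pD P) /\
  Forall (std_rule_ok i) (pLP P) /\
  Forall (map_rule_ok i n) (pMP P) /\
  Forall (ic_ok i) (pIC P).

Definition heads_std (PS : p2p) (i p : nat) : Prop :=
  exists h B, In (RStd h B) (rules (prog_of PS)) /\ a_id h = i /\ a_pred h = p.

Definition p2p_system (PS : p2p) : Prop :=
  (forall k P, nth_error PS k = Some P -> peer_ok (S k) (length PS) P) /\
  (forall i p, ~ (heads_std PS i p /\ is_mapping_pred PS i p)) /\
  (forall k1 h1 j1 b1 f1 k2 h2 j2 b2 f2,
     In (RMap k1 h1 j1 b1 f1) (rules (prog_of PS)) ->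
     In (RMap k2 h2 j2 b2 f2) (rules (prog_of PS)) ->
     a_id h1 = a_id h2 -> a_pred h1 = a_pred h2 ->
     RMap k1 h1 j1 b1 f1 = RMap k2 h2 j2 b2 f2).

Definition maximal_p2p (PS : p2p) : Prop :=
  forall k h j body phi, In (RMap k h j body phi) (rules (prog_of PS)) -> k = MaxMap.

(* Take a stable model M_i of the local program of every peer and let M be their union.
   A mapping rule survives in PS^M only if its head is already in M, and the local rules
   of peer i only mention atoms with identifier i, on which M coincides with M_i; hence M
   is the least model of St(PS^M), i.e. a weak model.  Weak models consist of heads of
   ground rules, of which there are finitely many, so every strictly ascending chain of
   weak models for the order of maximal weak models is finite, and the chains starting
   from M end in a maximal weak model. *)

From Stdlib Require Import List Wf_nat Lia Classical ClassicalEpsilon.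
Import ListNotations.

Definition count_sat {A : Type} (R : A -> Prop) (l : list A) : nat :=
  length (filter (fun a => if excluded_middle_informative (R a) then true else false) l).

Lemma count_sat_le_length {A : Type} (R : A -> Prop) (l : list A) :
  count_sat R l <= length l.
Proof. apply filter_length_le. Qed.

Lemma count_sat_mono {A : Type} (R1 R2 : A -> Prop) (l : list A) :
  (forall a, R1 a -> R2 a) -> count_sat R1 l <= count_sat R2 l.
Proof.
  intros H12. unfold count_sat. induction l as [|b l IH]; cbn; [lia|].
  destruct (excluded_middle_informative (R1 b)), (excluded_middle_informative (R2 b));
    cbn; try lia; exfalso; auto.
Qed.

Lemma count_sat_lt {A : Type} (R1 R2 : A -> Prop) (l : list A) (a : A) :
  (forall b, R1 b -> R2 b) -> In a l -> R2 a -> ~ R1 a ->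
  count_sat R1 l < count_sat R2 l.
Proof.
  intros H12 Ha H2a H1a. induction l as [|b l IH]; [destruct Ha|].
  pose proof (count_sat_mono R1 R2 l H12). unfold count_sat in *. cbn.
  destruct Ha as [->|Ha].
  - destruct (excluded_middle_informative (R1 a)), (excluded_middle_informative (R2 a));
      cbn; tauto || lia.
  - specialize (IH Ha).
    destruct (excluded_middle_informative (R1 b)), (excluded_middle_informative (R2 b));
      cbn; try lia; exfalso; auto.
Qed.

Section FinitelySupportedMaximal.

Variables (A X : Type) (W : X -> Prop) (f : X -> A -> Prop) (L : list A).
Hypothesis W_support : forall x a, W x -> f x a -> In a L.

Lemma exists_maximal_finite_support (x0 : X) :
  W x0 ->
  exists x, W x /\
    ~ exists y, W y /\ (forall a, f x a -> f y a) /\ ~ (forall a, f y a -> f x a).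
Proof.
  (* Passing to a strictly larger y adds an atom of L to f, so the measure decreases. *)
  induction x0 as [x IH]
    using (well_founded_induction (well_founded_ltof X (fun x => length L - count_sat (f x) L))).
  intros Wx.
  destruct (classic (exists y, W y /\ (forall a, f x a -> f y a) /\
                                 ~ (forall a, f y a -> f x a)))
    as [[y [Wy [Hxy Hyx]]]|Hnone]; [|eauto].
  apply (IH y); [|exact Wy].
  apply not_all_ex_not in Hyx as [a Ha]. apply imply_to_and in Ha as [Hya Hxa].
  pose proof (count_sat_lt (f x) (f y) L a Hxy (W_support y a Wy Hya) Hya Hxa).
  pose proof (count_sat_le_length (f y) L).
  unfold ltof. lia.
Qed.

End FinitelySupportedMaximal.

Lemma body_true_mono (M N : interp) (g : grule) :
  subseteq M N -> gr_neg g = [] -> body_true M g -> body_true N g.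
Proof.
  intros HMN Hneg [Hpos [_ Hbi]]. unfold body_true. rewrite Hneg.
  split; [exact (Forall_impl _ HMN Hpos)|auto].
Qed.

Lemma MM_supported_by_heads (GP : gprogram) (M : interp) :
  (forall g, GP g -> gr_neg g = []) ->
  MM GP M -> forall a, M a -> exists g, GP g /\ gr_head g = Some a.
Proof.
  intros Hneg [HM Hmin].
  set (N := fun a => M a /\ exists g, GP g /\ gr_head g = Some a).
  assert (HNM : subseteq N M) by (intros a Ha; apply Ha).
  assert (HN : is_model GP N).
  { intros g Hg Hbody.
    pose proof (HM g Hg (body_true_mono N M g HNM (Hneg g Hg) Hbody)) as Hhead.
    destruct (gr_head g) as [a|] eqn:E; [split; eauto|exact Hhead]. }
  intros a Ha. exact (proj2 (Hmin N HN HNM a Ha)).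
Qed.

Lemma least_model_unique_MM (GP : gprogram) (M : interp) :
  is_model GP M -> (forall N, is_model GP N -> subseteq M N) ->
  MM GP M /\ forall N, MM GP N -> set_eq N M.
Proof.
  intros HM Hleast. split; [split; [exact HM|intros N HN _; exact (Hleast N HN)]|].
  intros N [HN Hmin] a. split; [exact (Hmin M HM (Hleast N HN) a)|exact (Hleast N HN a)].
Qed.

Lemma St_ps_reduct_intro (GP : gprogram) (M : interp) (g : grule) :
  GP g -> Forall (fun a => ~ M a) (gr_neg g) -> gr_map g = false ->
  St (ps_reduct GP M) (drop_neg g).
Proof.
  intros Hg Hneg Hmap. exists (drop_neg g). split.
  - exists g. repeat split; [exact Hg|exact Hneg|rewrite Hmap; discriminate].
  - unfold drop_neg. cbn. rewrite Hmap. reflexivity.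
Qed.

Lemma St_ps_reduct_neg_free (GP : gprogram) (M : interp) (g : grule) :
  St (ps_reduct GP M) g -> gr_neg g = [].
Proof. intros [g' [[g'' [_ [_ [_ ->]]]] ->]]. reflexivity. Qed.

Definition herbrand_list (P : program) : list nat :=
  flat_map g_args (facts P) ++ flat_map consts_rule (rules P).

Lemma HU_in_herbrand_list (P : program) (c : nat) : HU P c -> In c (herbrand_list P).
Proof. intros Hc. apply in_app_iff. exact Hc. Qed.

Lemma HU_mono (P Q : program) (c : nat) :
  incl (facts P) (facts Q) -> incl (rules P) (rules Q) -> HU P c -> HU Q c.
Proof.
  intros Hf Hr [Hc|Hc]; apply in_flat_map in Hc as [y [Hy Hc]]; [left|right];
    apply in_flat_map; eauto.
Qed.

Lemma ground_mono (P Q : program) (g : grule) :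
  incl (facts P) (facts Q) -> incl (rules P) (rules Q) -> ground P g -> ground Q g.
Proof.
  intros Hf Hr [[a [Ha ->]]|[r [s [Hr' [HHU ->]]]]].
  - left. eauto.
  - right. exists r, s. repeat split; auto. intros x Hx. exact (HU_mono P Q _ Hf Hr (HHU x Hx)).
Qed.

Lemma var_in_inst_terms (s : subst) (ts : list term) (x : nat) :
  In x (flat_map vars_term ts) -> In (s x) (map (inst_term s) ts).
Proof.
  intros Hx. apply in_flat_map in Hx as [[y|c] [Ht Hx]]; [|destruct Hx].
  destruct Hx as [->|[]]. apply in_map_iff. exists (TVar x). auto.
Qed.

Lemma inst_terms_cases (s : subst) (ts : list term) (c : nat) :
  In c (map (inst_term s) ts) ->
  (exists x, In x (flat_map vars_term ts) /\ c = s x) \/ In c (flat_map consts_term ts).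
Proof.
  intros Hc. apply in_map_iff in Hc as [[x|d] [<- Ht]]; [left|right];
    [exists x; split; [apply in_flat_map; exists (TVar x)|]|apply in_flat_map; exists (TConst d)];
    cbn; auto.
Qed.

Definition head_of (r : rule) : option atom :=
  match r with RStd h _ | RMap _ h _ _ _ => Some h | RIC _ => None end.

Lemma inst_rule_head (s : subst) (r : rule) :
  gr_head (inst_rule s r) = option_map (inst_atom s) (head_of r).
Proof. destruct r; reflexivity. Qed.

Lemma head_of_incl (r : rule) (h : atom) :
  head_of r = Some h ->
  incl (vars_atom h) (vars_rule r) /\ incl (consts_atom h) (consts_rule r).
Proof.
  destruct r; cbn; intros E; try discriminate; injection E as <-;
    split; intros x Hx; apply in_app_iff; auto.
Qed.

Lemma ground_head_args_HU (P : program) (g : grule) (a : gatom) :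
  ground P g -> gr_head g = Some a -> forall c, In c (g_args a) -> HU P c.
Proof.
  intros [[b [Hb ->]]|[r [s [Hr [HHU ->]]]]] Ha c Hc.
  - injection Ha as <-. left. apply in_flat_map. eauto.
  - rewrite inst_rule_head in Ha.
    destruct (head_of r) as [h|] eqn:Eh; [|discriminate]. injection Ha as <-.
    destruct (head_of_incl r h Eh) as [Hvars Hconsts].
    destruct (inst_terms_cases s (a_args h) c Hc) as [[x [Hx ->]]|Hcst].
    + exact (HHU x (Hvars x Hx)).
    + right. apply in_flat_map. exists r. split; [exact Hr|exact (Hconsts c Hcst)].
Qed.

Lemma safe_var_in_pos_args (r : rule) (s : subst) (x : nat) :
  safe r -> In x (vars_rule r) ->
  exists b, In b (gr_pos (inst_rule s r)) /\ In (s x) (g_args b).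
Proof.
  assert (Hstd : forall B, In x (pos_vars B) ->
            exists b, In b (map (inst_atom s) (pos_atoms B)) /\ In (s x) (g_args b)).
  { intros B Hx. apply in_flat_map in Hx as [[a|a|bi] [Hl Hx]]; try destruct Hx.
    exists (inst_atom s a). split; [|exact (var_in_inst_terms s _ x Hx)].
    apply in_map, in_flat_map. exists (LPos a). cbn. auto. }
  destruct r as [h B|B|k h j body phi]; cbn; intros Hsafe Hx; auto.
  apply Hsafe, in_flat_map in Hx as [[p ts] [Hpa Hx]].
  exists (mkGAtom j p (map (inst_term s) ts)). split; [|exact (var_in_inst_terms s ts x Hx)].
  apply in_map_iff. exists (p, ts). auto.
Qed.

Lemma ground_safe_instance (P : program) (r : rule) (s : subst) :
  In r (rules P) -> safe r ->
  (forall b c, In b (gr_pos (inst_rule s r)) -> In c (g_args b) -> HU P c) ->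
  ground P (inst_rule s r).
Proof.
  intros Hr Hsafe Hpos. right. exists r, s. repeat split; [exact Hr|].
  intros x Hx. destruct (safe_var_in_pos_args r s x Hsafe Hx) as [b [Hb Hsx]]. eauto.
Qed.

Fixpoint tuples {A : Type} (U : list A) (n : nat) : list (list A) :=
  match n with
  | 0 => [[]]
  | S n => flat_map (fun c => map (cons c) (tuples U n)) U
  end.

Lemma tuples_complete {A : Type} (U l : list A) : incl l U -> In l (tuples U (length l)).
Proof.
  induction l as [|c l IH]; cbn; intros Hl; [auto|].
  apply in_flat_map. exists c. split; [apply Hl; left; reflexivity|].
  apply in_map, IH. intros d Hd. apply Hl. right. exact Hd.
Qed.

Definition gatom_sig (a : gatom) : nat * nat * nat := (g_id a, g_pred a, length (g_args a)).
Definition atom_sig (h : atom) : nat * nat * nat := (a_id h, a_pred h, length (a_args h)).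

Definition head_sigs (P : program) : list (nat * nat * nat) :=
  map gatom_sig (facts P) ++
  flat_map (fun r => match head_of r with Some h => [atom_sig h] | None => [] end) (rules P).

Definition candidate_heads (P : program) : list gatom :=
  flat_map (fun '(i, p, n) => map (mkGAtom i p) (tuples (herbrand_list P) n)) (head_sigs P).

Lemma ground_head_sig (P : program) (g : grule) (a : gatom) :
  ground P g -> gr_head g = Some a -> In (gatom_sig a) (head_sigs P).
Proof.
  intros [[b [Hb ->]]|[r [s [Hr [_ ->]]]]] Ha; apply in_app_iff.
  - injection Ha as <-. left. apply in_map. exact Hb.
  - right. rewrite inst_rule_head in Ha.
    destruct (head_of r) as [h|] eqn:Eh; [|discriminate]. injection Ha as <-.
    apply in_flat_map. exists r. rewrite Eh. split; [exact Hr|left].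
    unfold gatom_sig, atom_sig. cbn. rewrite length_map. reflexivity.
Qed.

Lemma ground_head_candidate (P : program) (g : grule) (a : gatom) :
  ground P g -> gr_head g = Some a -> In a (candidate_heads P).
Proof.
  intros Hg Ha. apply in_flat_map. exists (gatom_sig a).
  split; [exact (ground_head_sig P g a Hg Ha)|].
  destruct a as [i p args]. apply in_map, tuples_complete.
  intros c Hc. exact (HU_in_herbrand_list P c (ground_head_args_HU P g _ Hg Ha c Hc)).
Qed.

Lemma SM_is_model (P : program) (M : interp) : SM P M -> is_model (ground P) M.
Proof.
  intros [HM _] g Hg Hbody. apply (HM (drop_neg g)).
  - exists g. repeat split; [exact Hg|apply Hbody].
  - destruct Hbody as [Hpos [_ Hbi]]. repeat split; auto.
Qed.

Lemma SM_supported_by_heads (P : program) (M : interp) (a : gatom) :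
  SM P M -> M a -> exists g, ground P g /\ gr_head g = Some a.
Proof.
  intros HM Ha.
  assert (Hneg : forall g, gl_reduct (ground P) M g -> gr_neg g = [])
    by (intros g' [g [_ [_ ->]]]; reflexivity).
  destruct (MM_supported_by_heads _ M Hneg HM a Ha) as [g' [[g [Hg [_ ->]]] Ha']].
  eauto.
Qed.

Definition local_program (P : peer) : program := mkProgram (pD P) (pLP P ++ pIC P).

Definition local_grule (i : nat) (g : grule) : Prop :=
  gr_map g = false /\
  (forall a, In a (gr_pos g) -> g_id a = i) /\
  (forall a, In a (gr_neg g) -> g_id a = i) /\
  (forall a, gr_head g = Some a -> g_id a = i).

Lemma lit_ids_ok_atoms (i : nat) (B : list literal) :
  Forall (lit_ids_ok i) B ->
  (forall a, In a (pos_atoms B) -> a_id a = i) /\ (forall a, In a (neg_atoms B) -> a_id a = i).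
Proof.
  rewrite Forall_forall. intros HB.
  split; intros a Ha; apply in_flat_map in Ha as [[b|b|b] [Hl Ha]]; cbn in Ha;
    try destruct Ha as [<-|[]]; try destruct Ha; exact (HB _ Hl).
Qed.

Lemma local_rule_safe_local (i n : nat) (P : peer) (r : rule) :
  peer_ok i n P -> In r (pLP P ++ pIC P) -> safe r /\ forall s, local_grule i (inst_rule s r).
Proof.
  intros [_ [HLP [_ HIC]]] Hr. rewrite Forall_forall in HLP, HIC.
  apply in_app_iff in Hr as [Hr|Hr].
  - destruct (HLP r Hr) as [h [B [-> [Hh [HB Hsafe]]]]].
    destruct (lit_ids_ok_atoms i B HB) as [Hpos Hneg].
    split; [exact Hsafe|]. intros s. repeat split; cbn.
    + intros a Ha. apply in_map_iff in Ha as [b [<- Hb]]. exact (Hpos b Hb).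
    + intros a Ha. apply in_map_iff in Ha as [b [<- Hb]]. exact (Hneg b Hb).
    + intros a Ha. injection Ha as <-. exact Hh.
  - destruct (HIC r Hr) as [B [-> [HB Hsafe]]].
    destruct (lit_ids_ok_atoms i B HB) as [Hpos Hneg].
    split; [exact Hsafe|]. intros s. repeat split; cbn; try discriminate.
    + intros a Ha. apply in_map_iff in Ha as [b [<- Hb]]. exact (Hpos b Hb).
    + intros a Ha. apply in_map_iff in Ha as [b [<- Hb]]. exact (Hneg b Hb).
Qed.

Lemma ground_local_program_local (i n : nat) (P : peer) (g : grule) :
  peer_ok i n P -> ground (local_program P) g -> local_grule i g.
Proof.
  intros Hok [[a [Ha ->]]|[r [s [Hr [_ ->]]]]].
  - destruct Hok as [HD _]. rewrite Forall_forall in HD.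
    repeat split; cbn; try contradiction. intros b Hb. injection Hb as <-. exact (HD a Ha).
  - exact (proj2 (local_rule_safe_local i n P r Hok Hr) s).
Qed.

Lemma local_program_incl (PS : p2p) (P : peer) :
  In P PS ->
  incl (facts (local_program P)) (facts (prog_of PS)) /\
  incl (rules (local_program P)) (rules (prog_of PS)).
Proof.
  intros HP. split; intros x Hx; cbn in *; apply in_flat_map; exists P; split; auto.
  apply in_app_iff in Hx as [Hx|Hx]; apply in_app_iff; [left|right]; auto.
  apply in_app_iff. right. exact Hx.
Qed.

(* The default of [epsilon] is never used: every peer is locally consistent. *)
Definition local_model (P : peer) : interp :=
  epsilon (inhabits (fun _ => False)) (SM (local_program P)).

Lemma local_model_SM (P : peer) :
  locally_consistent_peer P -> SM (local_program P) (local_model P).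
Proof. intros HP. exact (epsilon_spec _ (SM (local_program P)) HP). Qed.

Definition union_model (PS : p2p) : interp := fun a => exists P, In P PS /\ local_model P a.

Section UnionOfLocalStableModels.

Variable PS : p2p.
Hypothesis PS_peers_ok : forall k P, nth_error PS k = Some P -> peer_ok (S k) (length PS) P.
Hypothesis PS_consistent : locally_consistent PS.

Lemma local_model_atoms (k : nat) (P : peer) (a : gatom) :
  nth_error PS k = Some P -> local_model P a ->
  g_id a = S k /\ forall c, In c (g_args a) -> HU (local_program P) c.
Proof.
  intros Hk Ha.
  pose proof (local_model_SM P (PS_consistent P (nth_error_In _ _ Hk))) as HSM.
  destruct (SM_supported_by_heads _ _ a HSM Ha) as [g [Hg Hhead]].
  destruct (ground_local_program_local _ _ P g (PS_peers_ok k P Hk) Hg) as [_ [_ [_ Hid]]].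
  split; [exact (Hid a Hhead)|exact (ground_head_args_HU _ g a Hg Hhead)].
Qed.

Lemma union_model_at (k : nat) (P : peer) (a : gatom) :
  nth_error PS k = Some P -> g_id a = S k -> union_model PS a -> local_model P a.
Proof.
  intros Hk Hid [P' [HP' Ha]].
  destruct (In_nth_error _ _ HP') as [k' Hk'].
  destruct (local_model_atoms k' P' a Hk' Ha) as [Hid' _].
  rewrite Hid in Hid'. injection Hid' as ->. rewrite Hk in Hk'. injection Hk' as ->. exact Ha.
Qed.

Lemma union_model_satisfies_local_rule (k : nat) (P : peer) (r : rule) (s : subst) :
  nth_error PS k = Some P -> In r (pLP P ++ pIC P) ->
  satisfies (union_model PS) (inst_rule s r).
Proof.
  intros Hk Hr [Hpos [Hneg Hbi]].
  pose proof (nth_error_In _ _ Hk) as HP.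
  pose proof (local_model_SM P (PS_consistent P HP)) as HSM.
  destruct (local_rule_safe_local _ _ P r (PS_peers_ok k P Hk) Hr) as [Hsafe Hloc].
  destruct (Hloc s) as [_ [Hpos_id [_ _]]].
  assert (Hpos_loc : forall b, In b (gr_pos (inst_rule s r)) -> local_model P b).
  { intros b Hb. rewrite Forall_forall in Hpos.
    exact (union_model_at k P b Hk (Hpos_id b Hb) (Hpos b Hb)). }
  (* By safety the instance only uses arguments of atoms of the local model, hence
     constants of the local Herbrand universe. *)
  assert (Hground : ground (local_program P) (inst_rule s r)).
  { apply ground_safe_instance; [exact Hr|exact Hsafe|].
    intros b c Hb Hc. exact (proj2 (local_model_atoms k P b Hk (Hpos_loc b Hb)) c Hc). }
  assert (Hbody_loc : body_true (local_model P) (inst_rule s r)).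
  { split; [apply Forall_forall; exact Hpos_loc|split; [|exact Hbi]].
    eapply Forall_impl; [|exact Hneg]. intros b Hnb Hb. exact (Hnb (ex_intro _ P (conj HP Hb))). }
  pose proof (SM_is_model _ _ HSM _ Hground Hbody_loc) as Hhead.
  destruct (gr_head (inst_rule s r)); [exists P|]; auto.
Qed.

Lemma union_model_is_model :
  is_model (St (ps_reduct (ground (prog_of PS)) (union_model PS))) (union_model PS).
Proof.
  intros g' [g0 [[g [Hg [Hneg [Hmap ->]]]] ->]] [Hpos [_ Hbi]]. cbn in Hpos, Hbi |- *.
  destruct Hg as [[a [Ha ->]]|[r [s [Hr [_ ->]]]]].
  - apply in_flat_map in Ha as [P [HP Ha]].
    exists P. split; [exact HP|].
    apply (SM_is_model _ _ (local_model_SM P (PS_consistent P HP))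
             (mkGRule (Some a) [] [] true false)); [left; eauto|repeat split; auto].
  - apply in_flat_map in Hr as [P [HP Hr]].
    destruct (In_nth_error _ _ HP) as [k Hk].
    assert (Hkind : In r (pLP P ++ pIC P) \/ In r (pMP P))
      by (cbn in Hr; rewrite !in_app_iff in Hr; rewrite in_app_iff; tauto).
    destruct Hkind as [Hlocal|Hmp].
    + exact (union_model_satisfies_local_rule k P r s Hk Hlocal (conj Hpos (conj Hneg Hbi))).
    + destruct (PS_peers_ok k P Hk) as [_ [_ [HMP _]]]. rewrite Forall_forall in HMP.
      destruct (HMP r Hmp) as [kind [h [j [body [phi [-> _]]]]]]. exact (Hmap eq_refl).
Qed.

Lemma union_model_least (N : interp) :
  is_model (St (ps_reduct (ground (prog_of PS)) (union_model PS))) N ->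
  subseteq (union_model PS) N.
Proof.
  intros HN a [P [HP Ha]].
  destruct (In_nth_error _ _ HP) as [k Hk].
  pose proof (local_model_SM P (PS_consistent P HP)) as HSM.
  set (N' := fun b => local_model P b /\ N b).
  assert (HN' : is_model (gl_reduct (ground (local_program P)) (local_model P)) N').
  { intros g' [g [Hg [Hneg ->]]] Hbody.
    destruct (ground_local_program_local _ _ P g (PS_peers_ok k P Hk) Hg)
      as [Hmap [_ [Hneg_id _]]].
    assert (Hg_PS : St (ps_reduct (ground (prog_of PS)) (union_model PS)) (drop_neg g)).
    { apply St_ps_reduct_intro; [| |exact Hmap].
      - destruct (local_program_incl PS P HP) as [Hf Hr]. exact (ground_mono _ _ g Hf Hr Hg).
      - rewrite Forall_forall in Hneg |- *. intros b Hb Hub.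
        exact (Hneg b Hb (union_model_at k P b Hk (Hneg_id b Hb) Hub)). }
    pose proof (HN _ Hg_PS
                  (body_true_mono N' N (drop_neg g) (fun b Hb => proj2 Hb) eq_refl Hbody))
      as HinN.
    pose proof (proj1 HSM _ (ex_intro _ g (conj Hg (conj Hneg eq_refl)))
                  (body_true_mono N' _ (drop_neg g) (fun b Hb => proj1 Hb) eq_refl Hbody))
      as Hinloc.
    cbn in HinN, Hinloc |- *. destruct (gr_head g); [split|]; assumption. }
  exact (proj2 (proj2 HSM N' HN' (fun b Hb => proj1 Hb) a Ha)).
Qed.

Lemma union_model_weak_model : weak_model PS (union_model PS).
Proof. exact (least_model_unique_MM _ _ union_model_is_model union_model_least). Qed.

End UnionOfLocalStableModels.

Lemma weak_model_candidate (PS : p2p) (M : interp) (a : gatom) :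
  weak_model PS M -> M a -> In a (candidate_heads (prog_of PS)).
Proof.
  intros [HM _] Ha.
  destruct (MM_supported_by_heads _ M (St_ps_reduct_neg_free _ M) HM a Ha)
    as [g' [[g0 [[g [Hg [_ [_ ->]]]] ->]] Hhead]].
  exact (ground_head_candidate _ g a Hg Hhead).
Qed.

Theorem theorem1 (PS : p2p) :
  p2p_system PS -> maximal_p2p PS -> locally_consistent PS ->
  exists M : interp, max_weak_model PS M.
Proof.
  intros [Hpeers _] _ Hcons.
  apply (exists_maximal_finite_support gatom interp (weak_model PS) (restrict_MP PS)
           (candidate_heads (prog_of PS))
           (fun M a HM Ha => weak_model_candidate PS M a HM (proj1 Ha))
           (union_model PS)).
  exact (union_model_weak_model PS Hpeers Hcons).
Qed.
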